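(* Let $\Omega_n=\dfrac{\pi^{n/2}}{\Gamma\left(\frac n2+1\right)}$ for $n\in\mathbb{N}_0$. Then \[ \sqrt{\frac{n+\frac12}{2\pi}+\frac1{16\pi n}-\frac1{32\pi n^2}-\frac5{256\pi n^3}}<\frac{\Omega_{n-1}}{\Omega_n} \] for every integer $n\ge1$, and \[ \frac{\Omega_{n-1}}{\Omega_n}<\sqrt{\frac{n+\frac12}{2\pi}+\frac1{16\pi n}-\frac1{32\pi n^2}} \] for every integer $n\ge2$.
   Context: $\Omega_n$ is the volume of the unit ball in $\mathbb{R}^n$ ($\Omega_0=1$); $\Gamma$ is Euler's gamma function. *)

From HB Require Import structures.
From mathcomp Require Import all_boot all_order all_algebra.
From mathcomp Require Import all_classical all_reals all_analysis.
Set Implicit Arguments. Unset Strict Implicit. Unset Printing Implicit Defensive.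
Import Order.TTheory GRing.Theory Num.Theory.
Local Open Scope classical_set_scope.
Local Open Scope ring_scope.

(* Euler's Gamma function, Gamma(x) = int_0^oo t^(x-1) e^(-t) dt (Lebesgue integral);
   only used at x >= 1 where the integral converges. *)
Definition Gamma (R : realType) (x : R) : R :=
  Rintegral (@lebesgue_measure R) `[0%R, +oo[%classic
    (fun t => powR t (x - 1) * expR (- t)).

(* Omega_n = pi^(n/2) / Gamma(n/2 + 1), the volume of the unit ball in R^n. *)
Definition Omega (R : realType) (n : nat) : R :=
  powR pi (n%:R / 2) / Gamma (n%:R / 2 + 1).

From HB Require Import structures.
From mathcomp Require Import all_boot all_order all_algebra.
From mathcomp Require Import all_classical all_reals all_analysis.
From mathcomp Require Import measurable_realfun ring lra zify.
Import Order.TTheory GRing.Theory Num.Theory.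
Import numFieldNormedType.Exports.
Set Implicit Arguments.
Unset Strict Implicit.
Unset Printing Implicit Defensive.
Local Open Scope classical_set_scope.
Local Open Scope ring_scope.

(* Write G_k := Gamma (k/2 + 1).  Then Omega_m / Omega_(m+1) = G_(m+1) / (G_m sqrt pi), and the two
   claims read l(m+1) < A_m < u(m+1) for A_m := 2 (G_(m+1) / G_m)^2 and explicit rational functions
   l <= u.  Only two properties of Gamma are needed.  Integration by parts gives
   G_(k+2) = (k/2 + 1) G_k, hence A_(m+2) (m+2)^2 = A_m (m+3)^2.  Integrating the AM-GM inequality
   sqrt t <= (sqrt y + t / sqrt y) / 2 against t^(y-1) e^(-t) gives Gamma (y + 1/2) <= sqrt y Gamma y,
   hence m + 1 <= A_m <= m + 2.  The approximants satisfy the same two-step recurrence with strict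
   inequalities, so A_j / u(j+1) strictly increases and A_j / l(j+1) strictly decreases along
   j = m, m+2, m+4, ...; as both ratios tend to 1 by the crude bounds, the first stays below 1 and
   the second above 1. *)

Section real_sequences.
Context {R : realType}.

Lemma lt1_of_increasing2 (r : nat -> R) (m : nat) (c : R) : 0 <= c ->
  (forall j, (m <= j)%N -> r j < r j.+2) ->
  (forall j, (m < j)%N -> r j <= 1 + c / j%:R) -> r m < 1.
Proof.
move=> c0 r_incr r_le; rewrite ltNge; apply/negP => r1.
set rho := r m.+2; have rho1 : 1 < rho by apply: le_lt_trans r1 (r_incr m _).
have rho_le k : rho <= r (m.+2 + k.*2)%N.
  elim: k => [|k IH]; first by rewrite addn0.
  by apply: (le_trans IH); apply: ltW; rewrite doubleS !addnS; apply: r_incr; lia.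
set k := Num.Def.archi_bound (c / (rho - 1)).
have ck : c / (rho - 1) < k%:R by apply: archi_boundP; rewrite divr_ge0 // subr_ge0 ltW.
set j := (m.+2 + k.*2)%N; have j0 : 0 < j%:R :> R by rewrite ltr0n.
have kj : k%:R <= j%:R :> R by rewrite ler_nat; lia.
have cj : c / j%:R < rho - 1.
  by rewrite ltr_pdivrMr // mulrC -ltr_pdivrMr ?subr_gt0 //; exact: lt_le_trans kj.
by have := r_le j (leq_trans (leqnSn m) (leq_addr _ _)); have := rho_le k; lra.
Qed.

Lemma ratio_step (a a' p q u u' : R) : 0 < a -> 0 < p -> 0 < u -> 0 < u' ->
  a' * p = a * q -> p * u' < q * u -> a / u < a' / u'.
Proof.
move=> a0 p0 u0 u'0 e lt; rewrite ltr_pdivrMr // mulrAC ltr_pdivlMr //; nra.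
Qed.

End real_sequences.

Section lebesgue_integral_itv.
Context {R : realType}.
Notation mu := (@lebesgue_measure R).

Lemma measurable_EFin_setT (D : set R) (g : R -> R) : measurable_fun setT g ->
  measurable_fun D (fun x => (g x)%:E).
Proof. by move=> mg; apply/measurable_EFinP; exact: measurable_funTS. Qed.

Lemma ge0_integral_itv_split y (g : R -> R) : 0 <= y -> measurable_fun setT g ->
  (forall t, 0 <= t -> 0 <= g t) ->
  (\int[mu]_(t in `[0%R, +oo[) (g t)%:E =
   \int[mu]_(t in `[0%R, y]) (g t)%:E + \int[mu]_(t in `[y, +oo[) (g t)%:E)%E.
Proof.
move=> y0 mg g0.
rewrite (@itv_bndbnd_setU _ _ (BLeft 0) (BLeft y) +oo%O) ?bnd_simp //.
rewrite ge0_integral_setU //=; first by rewrite integral_itv_bndo_bndc //; exact: measurable_EFin_setT.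
- exact: measurable_EFin_setT.
- move=> t; rewrite /= !in_itv /= => -[/andP[t0 _]|/andP[yt _]]; rewrite lee_fin g0 //.
  exact: le_trans yt.
- apply/disj_setPS => t [] /=; rewrite !in_itv /= => /andP[_ ty] /andP[yt _].
  by move: (lt_le_trans ty yt); rewrite ltxx.
Qed.

Lemma ge0_integral_subrK (D : set R) (g h : R -> R) : measurable D ->
  measurable_fun setT g -> measurable_fun setT h ->
  (forall t, D t -> 0 <= h t <= g t) ->
  (\int[mu]_(t in D) (g t)%:E =
   \int[mu]_(t in D) (g t - h t)%:E + \int[mu]_(t in D) (h t)%:E)%E.
Proof.
move=> mD mg mh hg; rewrite -ge0_integralD //.
- by apply: eq_integral => t _; rewrite -EFinD subrK.
- by move=> t /hg /andP[_]; rewrite lee_fin subr_ge0.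
- by apply: measurable_EFin_setT; exact: measurable_funB.
- by move=> t /hg /andP[]; rewrite lee_fin.
- exact: measurable_EFin_setT.
Qed.

End lebesgue_integral_itv.

Section gamma_integral.
Context {R : realType}.
Notation mu := (@lebesgue_measure R).
Implicit Types p t x : R.

Definition gamma_integrand p t : R := powR t p * expR (- t).

Definition egamma p : \bar R :=
  (\int[mu]_(t in `[0%R, +oo[) (gamma_integrand p t)%:E)%E.

Lemma GammaE x : Gamma x = fine (egamma (x - 1)).
Proof. by []. Qed.

Lemma gamma_integrand_ge0 p t : 0 <= gamma_integrand p t.
Proof. by rewrite mulr_ge0 ?powR_ge0 ?expR_ge0. Qed.

Lemma measurable_gamma_integrand p : measurable_fun setT (gamma_integrand p).
Proof.
apply: measurable_funM; first exact: measurable_powR.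
by apply: measurableT_comp => //; exact: measurable_funN.
Qed.

Lemma gamma_integrandS p t : 0 <= p -> 0 <= t ->
  gamma_integrand (p + 1) t = t * gamma_integrand p t.
Proof.
by move=> p0 t0; rewrite /gamma_integrand mulrA -{2}(addrK 1 p) mulr_powRB1 // ltr_wpDl.
Qed.

Lemma is_derive_expN x : is_derive x 1 (fun t => expR (- t)) (- expR (- x)).
Proof. by have := is_derive1_comp (is_derive_expR (- x)) (is_deriveNid x 1); rewrite mulrN1. Qed.

Lemma continuous_expN : continuous (fun t : R => expR (- t)).
Proof. by move=> x; apply: continuous_comp; [exact: continuousN | exact: continuous_expR]. Qed.

Lemma is_derive_gamma_integrandS p x : 0 < x ->
  is_derive x 1 (gamma_integrand (p + 1))
    ((p + 1) * gamma_integrand p x - gamma_integrand (p + 1) x).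
Proof.
move=> x0; have := is_deriveM (is_derive1_powR (p + 1) x0) (is_derive_expN x).
rewrite addrK /GRing.scale /= /gamma_integrand => D.
by apply: is_derive_eq; ring.
Qed.

Lemma gamma_integrand_cvg0 p : 0 <= p ->
  gamma_integrand p t @[t --> 0^'+] --> gamma_integrand p 0.
Proof.
move=> p0; apply: cvgM; last by apply: cvg_at_right_filter; exact: continuous_expN.
have [->|pn0] := eqVneq p 0.
  by rewrite powRr0; apply: cvg_near_cst; near=> s; rewrite powRr0.
by rewrite powR0 //; apply: powR_cvg0; rewrite lt_def pn0.
Unshelve. all: by end_near.
Qed.

Lemma gamma_integrand_continuous p t : 0 < t -> {for t, continuous (gamma_integrand p)}.
Proof.
move=> t0; apply: differentiable_continuous; apply/derivable1_diffP.
have := is_derive_gamma_integrandS (p - 1) t0; rewrite subrK => D.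
exact: ex_derive.
Qed.

Lemma gamma_integrand_within p : 0 <= p ->
  {within `[0, +oo[, continuous (gamma_integrand p)}.
Proof.
move=> p0; apply/continuous_within_itvcyP; split; last exact: gamma_integrand_cvg0.
by move=> t; rewrite in_itv /= andbT; exact: gamma_integrand_continuous.
Qed.

Lemma gamma_integrand_cvgy p : 0 <= p -> gamma_integrand p x @[x --> +oo] --> 0.
Proof.
move=> p0; set n := Num.Def.archi_bound p; have pn : p < n%:R := archi_boundP p0.
pose C : R := n.+1`!%:R; have C0 : 0 < C by rewrite ltr0n fact_gt0.
have cvgV : (fun x : R => x^-1) @ +oo --> 0.
  by apply/gtr0_cvgV0; [near=> x; near: x; exact: nbhs_pinfty_gt | exact: cvg_id].
apply: (@squeeze_cvgr _ _ _ _ (fun=> 0) (fun x => C * x^-1)); last 2 first.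
- exact: cvg_cst.
- by rewrite -(mulr0 C); apply: cvgM; [exact: cvg_cst | exact: cvgV].
near=> t; have t1 : 1 <= t by near: t; exact: nbhs_pinfty_ge.
apply/andP; split; first exact: gamma_integrand_ge0.
have t0 : 0 < t by lra.
have tpn : powR t p <= t ^+ n by rewrite -powR_mulrn ?ler_powR ?ltW.
have etn : t ^+ n.+1 / C <= expR t.
  by apply: le_trans (expR_ge1Dxn n (ltW t0)); rewrite lerDr.
rewrite /gamma_integrand expRN -ler_pdivlMr ?invr_gt0 ?expR_gt0 // invrK.
apply: (le_trans tpn); rewrite (_ : t ^+ n = C * t^-1 * (t ^+ n.+1 / C)).
  by rewrite ler_wpM2l // mulr_ge0 ?invr_ge0 ?ltW.
by rewrite exprS; field; rewrite !gt_eqF.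
Unshelve. all: by end_near.
Qed.

Lemma egamma_ge0 p : (0 <= egamma p)%E.
Proof. by apply: integral_ge0 => t _; rewrite lee_fin gamma_integrand_ge0. Qed.

Lemma egamma0 : egamma 0 = 1%E :> \bar R.
Proof.
rewrite /egamma /gamma_integrand; under eq_integral do rewrite powRr0 mul1r.
have dF x : is_derive x 1 (fun t => - expR (- t)) (expR (- x)).
  by have := is_deriveN (is_derive_expN x); rewrite opprK.
rewrite (@ge0_continuous_FTC2y _ _ (fun x => - expR (- x)) _ 0).
- by rewrite oppr0 expR0 EFinN oppeK add0e.
- by move=> x _; exact: expR_ge0.
- by apply: continuous_subspaceT; exact: continuous_expN.
- by rewrite -oppr0; apply: cvgN; exact: cvgr_expR.
- by move=> x _; exact: ex_derive.
- by apply: cvg_at_right_filter; apply: cvgN; exact: continuous_expN.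
- by move=> x _; rewrite derive1E derive_val.
Qed.

End gamma_integral.

(* Integration by parts for t^(p+1) e^(-t), split at t = p + 1 where the derivative
   (p + 1 - t) t^p e^(-t) changes sign: on the half-line [ge0_continuous_FTC2y] needs a
   nonnegative integrand. *)
Section gamma_recurrence.
Context {R : realType}.
Notation mu := (@lebesgue_measure R).
Variable p : R.
Hypothesis p_ge0 : 0 <= p.
Local Notation y := (p + 1).
Local Notation f := (gamma_integrand p).
Local Notation F := (gamma_integrand (p + 1)).

Let y_gt0 : 0 < y. Proof. by rewrite ltr_wpDl. Qed.

Let mF : measurable_fun setT F. Proof. exact: measurable_gamma_integrand. Qed.

Let myf : measurable_fun setT (fun t => y * f t).
Proof. by apply: measurable_funM => //; exact: measurable_gamma_integrand. Qed.

Let derivative_factor t : 0 <= t -> y * f t - F t = (y - t) * f t.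
Proof. by move=> t0; rewrite gamma_integrandS // mulrBl. Qed.

Let within_continuous_sub : {within `[0, +oo[, continuous (fun t => y * f t - F t)}.
Proof.
move=> t; apply: cvgB; last exact: gamma_integrand_within (ltW y_gt0) t.
by apply: cvgM; [exact: cvg_cst | exact: gamma_integrand_within p_ge0 t].
Qed.

Let within_continuous_subr : {within `[0, +oo[, continuous (fun t => F t - y * f t)}.
Proof.
move=> t; apply: cvgB; first exact: gamma_integrand_within (ltW y_gt0) t.
by apply: cvgM; [exact: cvg_cst | exact: gamma_integrand_within p_ge0 t].
Qed.

Lemma integral_gamma_integrand_itv0 :
  (\int[mu]_(t in `[0%R, y]) (y * f t)%:E =
    (F y)%:E + \int[mu]_(t in `[0%R, y]) (F t)%:E)%E.
Proof.
rewrite (@ge0_integral_subrK _ _ (fun t => y * f t) F) //; last first.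
  move=> t; rewrite /= in_itv /= => /andP[t0 ty].
  apply/andP; split; first exact: gamma_integrand_ge0.
  by rewrite -subr_ge0 derivative_factor // mulr_ge0 ?subr_ge0 ?gamma_integrand_ge0.
congr (_ + _)%E; rewrite (@continuous_FTC2 _ _ F 0 y y_gt0).
- by rewrite /gamma_integrand powR0 ?mul0r ?sube0 // gt_eqF.
- apply: (continuous_subspaceW _ within_continuous_sub) => t /=.
  by rewrite !in_itv /= => /andP[-> _].
- split; last by apply: cvg_at_left_filter; exact: gamma_integrand_continuous.
  + move=> t; rewrite in_itv /= => /andP[t0 _].
    by have D := is_derive_gamma_integrandS p t0; exact: ex_derive.
  + exact: gamma_integrand_cvg0 (ltW y_gt0).
- move=> t; rewrite in_itv /= => /andP[t0 _].
  by have D := is_derive_gamma_integrandS p t0; rewrite derive1E derive_val.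
Qed.

Lemma integral_gamma_integrand_itvy :
  (\int[mu]_(t in `[y, +oo[) (F t)%:E =
    (F y)%:E + \int[mu]_(t in `[y, +oo[) (y * f t)%:E)%E.
Proof.
have Fyf t : y <= t -> 0 <= F t - y * f t.
  move=> yt; have t0 : 0 <= t by apply: le_trans yt; exact: ltW.
  by rewrite -opprB derivative_factor // -mulNr mulr_ge0 ?gamma_integrand_ge0 // opprB subr_ge0.
rewrite (@ge0_integral_subrK _ _ F (fun t => y * f t)) //; last first.
  move=> t; rewrite /= in_itv /= andbT => yt.
  apply/andP; split; first by rewrite mulr_ge0 ?gamma_integrand_ge0 ?ltW.
  by rewrite -subr_ge0 Fyf.
congr (_ + _)%E; rewrite (@ge0_continuous_FTC2y _ _ (fun t => - F t) y 0).
- by rewrite EFinN sub0e oppeK.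
- exact: Fyf.
- apply: (continuous_subspaceW _ within_continuous_subr) => t /=.
  by rewrite !in_itv /= !andbT; apply: le_trans; exact: ltW.
- by rewrite -oppr0; apply: cvgN; exact: gamma_integrand_cvgy (ltW y_gt0).
- move=> t yt; have D := is_derive_gamma_integrandS p (lt_trans y_gt0 yt).
  exact/derivableN/ex_derive.
- by apply: cvgN; apply: cvg_at_right_filter; exact: gamma_integrand_continuous.
- move=> t; rewrite in_itv /= andbT => yt.
  have D := is_deriveN (is_derive_gamma_integrandS p (lt_trans y_gt0 yt)).
  by rewrite derive1E derive_val opprB.
Qed.

Lemma egammaS : egamma (p + 1) = ((p + 1)%:E * egamma p)%E.
Proof.
rewrite /egamma -ge0_integralZl_EFin ?ltW //; last 2 first.
- by move=> t _; rewrite lee_fin gamma_integrand_ge0.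
- exact: measurable_EFin_setT (measurable_gamma_integrand p).
under [in RHS]eq_integral do rewrite -EFinM.
rewrite !(@ge0_integral_itv_split _ y) ?ltW //; last 2 first.
- by move=> t t0; rewrite mulr_ge0 ?gamma_integrand_ge0 ?ltW.
- by move=> t t0; exact: gamma_integrand_ge0.
rewrite integral_gamma_integrand_itv0 integral_gamma_integrand_itvy.
by rewrite addeA [(_ + (F y)%:E)%E]addeC addeA.
Qed.

End gamma_recurrence.

Section gamma_half_step.
Context {R : realType}.
Notation mu := (@lebesgue_measure R).
Implicit Types p t : R.

Lemma gamma_integrand_half p t : 0 <= p -> 0 <= t ->
  gamma_integrand (p + 2^-1) t = Num.sqrt t * gamma_integrand p t.
Proof.
move=> p0 t0; rewrite /gamma_integrand powRD ?powR12_sqrt //; first ring.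
by rewrite gt_eqF // ltr_wpDl.
Qed.

Lemma gamma_integrand_half_le p t : 0 <= p -> 0 <= t ->
  gamma_integrand (p + 2^-1) t <=
    2^-1 * Num.sqrt (p + 1) * gamma_integrand p t +
    2^-1 / Num.sqrt (p + 1) * gamma_integrand (p + 1) t.
Proof.
move=> p0 t0; set s := Num.sqrt (p + 1); have s0 : 0 < s by rewrite sqrtr_gt0 ltr_wpDl.
rewrite gamma_integrand_half // gamma_integrandS // -subr_ge0.
have -> : 2^-1 * s * gamma_integrand p t + 2^-1 / s * (t * gamma_integrand p t) -
    Num.sqrt t * gamma_integrand p t =
    gamma_integrand p t * (s - Num.sqrt t) ^+ 2 / (2 * s).
  by rewrite -{2}(sqr_sqrtr t0); field; rewrite gt_eqF.
apply: divr_ge0; first by rewrite mulr_ge0 ?sqr_ge0 ?gamma_integrand_ge0.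
by rewrite mulr_ge0 // ltW.
Qed.

Lemma integral_gamma_integrand_lincomb a b p q : 0 <= a -> 0 <= b ->
  (\int[mu]_(t in `[0%R, +oo[) (a * gamma_integrand p t + b * gamma_integrand q t)%:E =
   a%:E * egamma p + b%:E * egamma q)%E.
Proof.
move=> a0 b0.
under eq_integral do rewrite EFinD !EFinM.
rewrite ge0_integralD //; last 4 first.
- by move=> t _; rewrite mule_ge0 ?lee_fin ?gamma_integrand_ge0.
- apply: emeasurable_funM => //; exact: measurable_EFin_setT (measurable_gamma_integrand _).
- by move=> t _; rewrite mule_ge0 ?lee_fin ?gamma_integrand_ge0.
- apply: emeasurable_funM => //; exact: measurable_EFin_setT (measurable_gamma_integrand _).
rewrite !ge0_integralZl_EFin //.
all: first [by move=> t _; rewrite lee_fin gamma_integrand_ge0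
           | exact: measurable_EFin_setT (measurable_gamma_integrand _)].
Qed.

Lemma egamma_half_le p : 0 <= p ->
  (egamma (p + 2^-1) <= (Num.sqrt (p + 1))%:E * egamma p)%E.
Proof.
move=> p0; set s := Num.sqrt (p + 1); have s0 : 0 < s by rewrite sqrtr_gt0 ltr_wpDl.
have c1 : 0 <= 2^-1 * s by rewrite mulr_ge0 ?ltW.
have c2 : 0 <= 2^-1 / s by rewrite mulr_ge0 ?invr_ge0 ?ltW.
have -> : (s%:E * egamma p = \int[mu]_(t in `[0%R, +oo[)
    (2^-1 * s * gamma_integrand p t + 2^-1 / s * gamma_integrand (p + 1) t)%:E)%E.
  have s2 : s ^+ 2 = p + 1 by rewrite sqr_sqrtr ?addr_ge0.
  rewrite integral_gamma_integrand_lincomb // egammaS // muleA -EFinM.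
  have c3 : 0 <= 2^-1 / s * (p + 1) by rewrite mulr_ge0 ?addr_ge0.
  rewrite -ge0_muleDl ?lee_fin //.
  rewrite -[X in _ = (X * _)%E]EFinD -s2.
  by congr (_%:E * _)%E; field; rewrite gt_eqF.
rewrite /egamma; apply: ge0_le_integral => //.
- by move=> t _; rewrite lee_fin gamma_integrand_ge0.
- exact: measurable_EFin_setT (measurable_gamma_integrand _).
- apply: measurable_EFin_setT; apply: measurable_funD; apply: measurable_funM => //;
    exact: measurable_gamma_integrand.
- by move=> t; rewrite /= in_itv /= andbT => t0; rewrite lee_fin gamma_integrand_half_le.
Qed.

(* Finiteness comes from the half-step bound at p, positivity from the one at p + 1/2
   combined with the recurrence. *)
Lemma egamma_half_real (p r : R) : 0 <= p -> 0 < r -> egamma p = r%:E ->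
  exists2 r', 0 < r' & egamma (p + 2^-1) = r'%:E.
Proof.
move=> p0 r0 er; have p1 : 0 <= p + 2^-1 by rewrite addr_ge0.
have ub := egamma_half_le p0; have lb := egamma_half_le p1.
have half2 : 2^-1 + 2^-1 = 1 :> R by field.
rewrite -addrA half2 egammaS // er in lb.
rewrite er in ub; move: (egamma_ge0 (p + 2^-1)) ub lb.
case: (egamma (p + 2^-1)) => [r'| |] //= _ _; rewrite -!EFinM lee_fin => lb.
exists r' => //; rewrite -(pmulr_rgt0 _ (_ : 0 < Num.sqrt (p + 2^-1 + 1))).
  by apply: lt_le_trans lb; rewrite mulr_gt0 // ltr_wpDl.
by rewrite sqrtr_gt0 ltr_wpDl.
Qed.

Lemma egamma_half_nat (k : nat) : exists2 r : R, 0 < r & egamma (k%:R / 2) = r%:E.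
Proof.
elim: k => [|k [r r0 er]]; first by exists 1; rewrite // mul0r egamma0.
rewrite -natr1 mulrDl mul1r; exact: egamma_half_real er.
Qed.

End gamma_half_step.

Section Gamma_half.
Context {R : realType}.

Definition Gamma_half (k : nat) : R := Gamma (k%:R / 2 + 1).

Lemma egamma_Gamma_half k : egamma (k%:R / 2) = (Gamma_half k)%:E.
Proof. by rewrite /Gamma_half GammaE addrK; case: (@egamma_half_nat R k) => r _ ->. Qed.

Lemma Gamma_half_gt0 k : 0 < Gamma_half k.
Proof. by rewrite /Gamma_half GammaE addrK; case: (@egamma_half_nat R k) => r r0 ->. Qed.

Lemma Gamma_halfSS k : Gamma_half k.+2 = (k%:R / 2 + 1) * Gamma_half k.
Proof.
have := egammaS (divr_ge0 (ler0n R k) (ler0n R 2)).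
rewrite !egamma_Gamma_half (_ : k%:R / 2 + 1 = k.+2%:R / 2 :> R).
  by rewrite egamma_Gamma_half => -[].
by rewrite -[k.+2]addn2 natrD; field.
Qed.

Lemma Gamma_half_sqr_le k : Gamma_half k.+1 ^+ 2 <= Gamma_half k * Gamma_half k.+2.
Proof.
have k0 : 0 <= k%:R / 2 :> R by rewrite divr_ge0.
have := egamma_half_le k0.
rewrite !egamma_Gamma_half (_ : k%:R / 2 + 2^-1 = k.+1%:R / 2 :> R); last first.
  by rewrite -natr1; field.
rewrite egamma_Gamma_half -EFinM lee_fin => le.
rewrite Gamma_halfSS mulrCA -expr2.
have k1 : 0 <= k%:R / 2 + 1 :> R by rewrite addr_ge0.
rewrite -(sqr_sqrtr k1) -exprMn ler_pXn2r ?nnegrE ?mulr_ge0 ?sqrtr_ge0 //.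
all: by rewrite ltW // Gamma_half_gt0.
Qed.

End Gamma_half.

Section approximants.
Context {R : realType}.
Implicit Types x : R.

Definition upper_approx x : R := x + 2^-1 + x^-1 / 8 - x^-1 ^+ 2 / 16.
Definition lower_approx x : R := upper_approx x - 5 * x^-1 ^+ 3 / 128.

Lemma upper_approx_ge x : 1 <= x -> x + 2^-1 <= upper_approx x.
Proof.
move=> x1; have t0 : 0 < x^-1 by rewrite invr_gt0; lra.
have t1 : x^-1 <= 1 by rewrite invf_le1 //; lra.
rewrite /upper_approx; nra.
Qed.

Lemma upper_approx_gt0 x : 1 <= x -> 0 < upper_approx x.
Proof. by move=> x1; apply: (lt_le_trans _ (upper_approx_ge x1)); lra. Qed.

Lemma lower_approx_gt0 x : 1 <= x -> 0 < lower_approx x.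
Proof.
move=> x1; have t0 : 0 < x^-1 by rewrite invr_gt0; lra.
have t1 : x^-1 <= 1 by rewrite invf_le1 //; lra.
have t3 : x^-1 ^+ 3 <= 1 by rewrite exprn_ile1 // ltW.
rewrite /lower_approx /upper_approx; nra.
Qed.

Lemma lower_approx_le x : 1 <= x -> lower_approx x <= x + 1.
Proof.
move=> x1; have t0 : 0 < x^-1 by rewrite invr_gt0; lra.
have t1 : x^-1 <= 1 by rewrite invf_le1 //; lra.
have t3 : 0 <= x^-1 ^+ 3 by rewrite exprn_ge0 // ltW.
rewrite /lower_approx /upper_approx; nra.
Qed.

Lemma upper_approx_step x : 2 <= x ->
  (x + 1) ^+ 2 * upper_approx (x + 2) < (x + 2) ^+ 2 * upper_approx x.
Proof.
move=> x2; rewrite -subr_gt0.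
have -> : (x + 2) ^+ 2 * upper_approx x - (x + 1) ^+ 2 * upper_approx (x + 2) =
    (5 * x ^+ 2 - 16) / (16 * x ^+ 2 * (x + 2) ^+ 2).
  by rewrite /upper_approx; field; rewrite !gt_eqF //; lra.
by rewrite divr_gt0 ?mulr_gt0 ?exprn_gt0 //; nra.
Qed.

Lemma lower_approx_step x : 1 <= x ->
  (x + 2) ^+ 2 * lower_approx x < (x + 1) ^+ 2 * lower_approx (x + 2).
Proof.
move=> x1; rewrite -subr_gt0.
have -> : (x + 1) ^+ 2 * lower_approx (x + 2) - (x + 2) ^+ 2 * lower_approx x =
    (115 * x ^+ 3 + 528 * x ^+ 2 + 656 * x + 160) / (128 * x ^+ 3 * (x + 2) ^+ 3).
  by rewrite /lower_approx /upper_approx; field; rewrite !gt_eqF //; lra.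
have x2 : 0 < x ^+ 2 by rewrite exprn_gt0 //; lra.
have x3 : 0 < x ^+ 3 by rewrite exprn_gt0 //; lra.
apply: divr_gt0; first lra.
have y3 : 0 < (x + 2) ^+ 3 by rewrite exprn_gt0 //; lra.
by rewrite mulr_gt0 // mulr_gt0.
Qed.

Lemma upper_approxE (c x : R) : 0 < c -> 0 < x ->
  (x + 2^-1) / (2 * c) + 1 / (16 * c * x) - 1 / (32 * c * x ^+ 2) =
  upper_approx x / (2 * c).
Proof. by move=> c0 x0; rewrite /upper_approx; field; rewrite !gt_eqF. Qed.

Lemma lower_approxE (c x : R) : 0 < c -> 0 < x ->
  (x + 2^-1) / (2 * c) + 1 / (16 * c * x) - 1 / (32 * c * x ^+ 2) -
    5 / (256 * c * x ^+ 3) = lower_approx x / (2 * c).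
Proof. by move=> c0 x0; rewrite /lower_approx /upper_approx; field; rewrite !gt_eqF. Qed.

End approximants.

Section squared_ratio_bounds.
Context {R : realType}.
Variable A : nat -> R.
Hypothesis A_gt0 : forall m, 0 < A m.
Hypothesis A_rec : forall m, A m.+2 * m.+2%:R ^+ 2 = A m * m.+3%:R ^+ 2.

Let natr_succ j : j.+2%:R = j.+1%:R + 1 :> R. Proof. by rewrite -natr1. Qed.
Let natr_succ2 j : j.+3%:R = j.+1%:R + 2 :> R. Proof. by rewrite -[j.+3]addn2 natrD. Qed.

Let A_recE j : A j.+2 * (j.+1%:R + 1) ^+ 2 = A j * (j.+1%:R + 2) ^+ 2.
Proof. by rewrite -natr_succ -natr_succ2. Qed.

Lemma lt_upper_approx : (forall m, A m <= m.+2%:R) ->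
  forall m, (1 <= m)%N -> A m < upper_approx m.+1%:R.
Proof.
move=> A_le m m1.
have u0 j : 0 < upper_approx (j.+1%:R : R) by apply: upper_approx_gt0; rewrite ler1n.
suff : A m / upper_approx m.+1%:R < 1 by rewrite ltr_pdivrMr ?mul1r.
apply: (@lt1_of_increasing2 _ (fun j => A j / upper_approx j.+1%:R) _ 1) => // j jm.
- have x2 : 2 <= (j.+1%:R : R) by rewrite ler_nat ltnS; exact: leq_trans jm.
  by apply: ratio_step (A_recE j) _ => //; rewrite natr_succ2; exact: upper_approx_step.
- have j0 : 0 < j%:R :> R by rewrite ltr0n; exact: leq_ltn_trans jm.
  have tj : j%:R^-1 * j%:R = 1 :> R by rewrite mulVf // gt_eqF.
  have t0 : 0 <= j%:R^-1 :> R by rewrite invr_ge0 ltW.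
  have uj : j%:R + 1 + 2^-1 <= upper_approx (j%:R + 1 : R).
    by apply: upper_approx_ge; rewrite natr1 ler1n.
  have Aj : A j <= j%:R + 2 by have := A_le j; rewrite -addn2 natrD.
  have := u0 j; rewrite -natr1 => uj0.
  rewrite div1r ler_pdivrMr //; nra.
Qed.

Lemma gt_lower_approx : (forall m, m.+2%:R <= A m.+1) ->
  forall m, lower_approx m.+1%:R < A m.
Proof.
move=> A_ge m.
have l0 j : 0 < lower_approx (j.+1%:R : R) by apply: lower_approx_gt0; rewrite ler1n.
suff r1 : 2 - A m / lower_approx m.+1%:R < 1.
  by rewrite -[X in X < _]mul1r -ltr_pdivlMr //; lra.
apply: (@lt1_of_increasing2 _ (fun j => 2 - A j / lower_approx j.+1%:R) _ 1) => // j jm.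
- rewrite ltrD2l ltrN2.
  have x1 : 1 <= (j.+1%:R : R) by rewrite ler1n.
  apply: ratio_step (esym (A_recE j)) _ => //.
  by rewrite natr_succ2; exact: lower_approx_step.
- have j0 : 0 < j%:R :> R by rewrite ltr0n; exact: leq_ltn_trans jm.
  have tj : j%:R^-1 * j%:R = 1 :> R by rewrite mulVf // gt_eqF.
  have t0 : 0 <= j%:R^-1 :> R by rewrite invr_ge0 ltW.
  have t1 : j%:R^-1 <= 1 :> R by rewrite invf_le1 // ler1n; exact: leq_ltn_trans jm.
  have lj : lower_approx (j%:R + 1 : R) <= j%:R + 2.
    by rewrite (_ : 2 = 1 + 1 :> R) // addrA lower_approx_le // natr1 ler1n.
  have Aj : j%:R + 1 <= A j.
    by have := A_ge j.-1; rewrite prednK ?natr1 //; exact: leq_ltn_trans jm.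
  have := l0 j; rewrite -natr1 => lj0.
  have Al : (1 - j%:R^-1) * lower_approx (j%:R + 1 : R) <= A j by nra.
  rewrite -ler_pdivlMr // in Al; rewrite div1r; lra.
Qed.

End squared_ratio_bounds.

Section omega_ratio.
Context {R : realType}.

Definition Gamma_half_ratio (m : nat) : R := 2 * (Gamma_half m.+1 / Gamma_half m) ^+ 2.

Lemma Omega_ratioE m :
  Omega R m / Omega R m.+1 = Num.sqrt (Gamma_half_ratio m / (2 * pi)).
Proof.
have pi0 : (0 : R) < pi := pi_gt0 R.
have pi_half : powR pi (m.+1%:R / 2) = powR pi (m%:R / 2) * Num.sqrt pi :> R.
  rewrite -powR12_sqrt ?ltW // -powRD ?pnatr_eq0 ?implybT ?gt_eqF //.
  by congr powR; rewrite -natr1; field.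
rewrite /Omega -/(Gamma_half m) -/(Gamma_half m.+1) pi_half /Gamma_half_ratio.
have := @Gamma_half_gt0 R m; have := @Gamma_half_gt0 R m.+1.
have : 0 < powR pi (m%:R / 2) :> R by rewrite powR_gt0.
move: (Gamma_half m) (Gamma_half m.+1) (powR pi (m%:R / 2)) => a b c c0 b0 a0.
set s := Num.sqrt pi; have s0 : 0 < s by rewrite sqrtr_gt0.
have s2 : s ^+ 2 = pi by rewrite sqr_sqrtr // ltW.
have -> : 2 * (b / a) ^+ 2 / (2 * pi) = (b / (a * s)) ^+ 2.
  by rewrite -s2; field; rewrite !gt_eqF.
rewrite sqrtr_sqr gtr0_norm ?divr_gt0 ?mulr_gt0 //.
by field; rewrite !gt_eqF.
Qed.

Lemma Gamma_half_ratio_gt0 m : 0 < Gamma_half_ratio m.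
Proof. by rewrite mulr_gt0 // exprn_gt0 // divr_gt0 // Gamma_half_gt0. Qed.

Lemma Gamma_half_ratio_rec m :
  Gamma_half_ratio m.+2 * m.+2%:R ^+ 2 = Gamma_half_ratio m * m.+3%:R ^+ 2.
Proof.
rewrite /Gamma_half_ratio (Gamma_halfSS m.+1) (Gamma_halfSS m).
have e1 : m.+1%:R = m%:R + 1 :> R by rewrite natr1.
have e2 : m.+2%:R = m%:R + 2 :> R by rewrite -addn2 natrD.
have e3 : m.+3%:R = m%:R + 3 :> R by rewrite -addn3 natrD.
rewrite e1 e2 e3.
have := @Gamma_half_gt0 R m; have := @Gamma_half_gt0 R m.+1.
move: (Gamma_half m) (Gamma_half m.+1) => a b b0 a0.
by field; rewrite !gt_eqF //; lra.
Qed.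

Lemma Gamma_half_ratio_le m : Gamma_half_ratio m <= m.+2%:R.
Proof.
have := @Gamma_half_sqr_le R m; have := @Gamma_half_gt0 R m.
have e2 : m.+2%:R = m%:R + 2 :> R by rewrite -addn2 natrD.
rewrite /Gamma_half_ratio Gamma_halfSS e2.
move: (Gamma_half m) (Gamma_half m.+1) => a b a0 ba.
rewrite expr_div_n mulrA ler_pdivrMr ?exprn_gt0 //; lra.
Qed.

Lemma Gamma_half_ratio_ge m : m.+2%:R <= Gamma_half_ratio m.+1.
Proof.
have := @Gamma_half_sqr_le R m; have := @Gamma_half_gt0 R m.+1.
have e2 : m.+2%:R = m%:R + 2 :> R by rewrite -addn2 natrD.
rewrite /Gamma_half_ratio Gamma_halfSS e2.
move: (Gamma_half m) (Gamma_half m.+1) => a b b0 ba.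
have m0 : 0 <= m%:R :> R by [].
rewrite expr_div_n mulrA ler_pdivlMr ?exprn_gt0 //; nra.
Qed.

End omega_ratio.

Theorem theorem11 (R : realType) :
  (forall n : nat, (1 <= n)%N ->
     Num.sqrt ((n%:R + 2^-1) / (2 * pi) + 1 / (16 * pi * n%:R)
               - 1 / (32 * pi * n%:R ^+ 2) - 5 / (256 * pi * n%:R ^+ 3))
     < Omega R n.-1 / Omega R n) /\
  (forall n : nat, (2 <= n)%N ->
     Omega R n.-1 / Omega R n
     < Num.sqrt ((n%:R + 2^-1) / (2 * pi) + 1 / (16 * pi * n%:R)
                 - 1 / (32 * pi * n%:R ^+ 2))).
Proof.
have pi0 : (0 : R) < pi := pi_gt0 R.
have pi2 : (0 : R) < 2 * pi by rewrite mulr_gt0.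
have rec := @Gamma_half_ratio_rec R; have pos := @Gamma_half_ratio_gt0 R.
split=> -[//|m] m1; rewrite /= Omega_ratioE ?lower_approxE ?upper_approxE ?ltr0n //.
- rewrite ltr_sqrt ?divr_gt0 // ltr_pM2r ?invr_gt0 //.
  exact: gt_lower_approx pos rec (@Gamma_half_ratio_ge R) m.
- rewrite ltr_sqrt ?divr_gt0 ?upper_approx_gt0 ?ler1n // ltr_pM2r ?invr_gt0 //.
  by apply: lt_upper_approx pos rec (@Gamma_half_ratio_le R) _ _; rewrite -ltnS.
Qed.
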